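(* Let $\{\rho_n\}_{n\ge0},\{\beta_n\}_{n\ge0},\{\tau_n\}_{n\ge0},\{\gamma_n\}_{n\ge0}$ be sequences of complex numbers with $\rho_n\neq0$ and $\tau_n\neq0$ for all $n\ge0$, $\beta_0\neq0,\pm1$ and $\beta_n\neq0$ for $n\ge1$. Let $\{\mathcal{P}_n(\lambda)\}_{n\ge0}$ be the polynomials defined by $\mathcal{P}_0(\lambda)=1$, $\mathcal{P}_1(\lambda)=\rho_0(\lambda-\beta_0)$ and $$\mathcal{P}_{n+1}(\lambda)=\rho_n(\lambda-\beta_n)\mathcal{P}_n(\lambda)+\tau_n(\lambda-\gamma_n)\mathcal{P}_{n-1}(\lambda),\quad n\ge1.$$ Let $\{\alpha_n\}_{n\ge0}\subset\mathbb{R}\setminus\{0\}$ and consider the linear combinations $\mathcal{Q}_n(\lambda)=\mathcal{P}_n(\lambda)+\alpha_n\mathcal{P}_{n-1}(\lambda)$, $n\ge1$, with $\mathcal{Q}_0(\lambda)=\mathcal{P}_0(\lambda)=1$. Then there exist constants $p_n,q_n,r_n,s_n,t_n,u_n,v_n,w_n$ ($n\ge1$) such that $\{\mathcal{Q}_n(\lambda)\}$ satisfies the three term recurrence relation $$(p_n\lambda+q_n)\mathcal{Q}_{n+1}(\lambda)=(r_n\lambda^2+s_n\lambda+t_n)\mathcal{Q}_n(\lambda)+(u_n\lambda^2+v_n\lambda+w_n)\mathcal{Q}_{n-1}(\lambda),\quad n\ge1,$$ with $\mathcal{Q}_1(\lambda)=\rho_0(\lambda+\alpha_1\rho_0^{-1}-\beta_0)$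 and $\mathcal{Q}_0(\lambda)=1$.
   Context: $\lambda$ is a real or complex variable. The polynomials $\mathcal{P}_n$ generated by such a recurrence are called $R_I$ polynomials. *)

From mathcomp Require Import all_boot all_algebra.
From mathcomp Require Import reals complex.
Set Implicit Arguments. Unset Strict Implicit. Unset Printing Implicit Defensive.
Import GRing.Theory Num.Theory.
Local Open Scope ring_scope.

Section RI.
Variable R : realType.
Local Notation C := R[i].
Variables (rho beta tau gamma : nat -> C).

(* RI_pair n = (P_n, P_{n+1}) *)
Fixpoint RI_pair (n : nat) : {poly C} * {poly C} :=
  match n with
  | 0 => (1, rho 0 *: ('X - (beta 0)%:P))
  | m.+1 => let: (a, b) := RI_pair m in
            (b, rho m.+1 *: ('X - (beta m.+1)%:P) * b
                + tau m.+1 *: ('X - (gamma m.+1)%:P) * a)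
  end.

Definition RIpoly (n : nat) : {poly C} := (RI_pair n).1.

Variable alpha : nat -> R.
Definition RIQpoly (n : nat) : {poly C} :=
  match n with
  | 0 => 1
  | m.+1 => RIpoly m.+1 + ((alpha m.+1)%:C)%C *: RIpoly m
  end.
End RI.

(* Eliminating P_n between Q_{n+1} = P_{n+1} + alpha_{n+1} P_n and the recurrence
   of the P_n gives Q_{k+1} = L_k Q_k + f_k P_{k-1} with linear L_k = multQ k and
   f_k = multP k.
   The same relation one step lower expresses f_{k-1} P_{k-1} through Q_k and
   Q_{k-1}, so multiplying the first one by f_{k-1} eliminates P_{k-1}: the
   result is a three-term recurrence with a linear factor on Q_{k+1} and
   quadratic factors on Q_k and Q_{k-1}.  When f_k = 0 the relation
   Q_{k+1} = L_k Q_k is already of this shape. *)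

From mathcomp Require Import all_boot all_algebra.
From mathcomp Require Import reals complex.
From mathcomp Require Import ring.
Set Implicit Arguments.
Unset Strict Implicit.
Import GRing.Theory Num.Theory.
Local Open Scope ring_scope.

Section PolySizeLe3.
Variable F : nzRingType.
Implicit Types p q : {poly F}.

Lemma poly_size_le3E p :
  (size p <= 3)%N -> p = p`_2 *: 'X^2 + p`_1 *: 'X + (p`_0)%:P.
Proof.
move=> sp; apply/polyP => i; rewrite !coefD !coefZ coefXn coefX coefC.
case: i => [|[|[|i]]] /=; rewrite ?mulr0 ?mulr1 ?add0r ?addr0 //.
by rewrite nth_default // (leq_trans sp).
Qed.

Lemma poly_size_le2E p : (size p <= 2)%N -> p = p`_1 *: 'X + (p`_0)%:P.
Proof.
move=> sp; have p2 : p`_2 = 0 by rewrite nth_default.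
by rewrite {1}(@poly_size_le3E p) ?(leq_trans sp) // p2 scale0r add0r.
Qed.

Lemma poly_size_le3_neq0 p :
  (size p <= 3)%N -> p != 0 -> [|| p`_2 != 0, p`_1 != 0 | p`_0 != 0].
Proof.
move=> /poly_size_le3E pE; apply: contraNT; rewrite !negb_or !negbK.
by case/and3P=> /eqP p2 /eqP p1 /eqP p0; rewrite pE p2 p1 p0 !scale0r !add0r.
Qed.

Lemma poly_size_le2_neq0 p :
  (size p <= 2)%N -> p != 0 -> (p`_1 != 0) || (p`_0 != 0).
Proof.
move=> /poly_size_le2E pE; apply: contraNT; rewrite negb_or !negbK.
by case/andP=> /eqP p1 /eqP p0; rewrite pE p1 p0 scale0r add0r.
Qed.

Lemma size_mul_le2 p q :
  (size p <= 2)%N -> (size q <= 2)%N -> (size (p * q)%R <= 3)%N.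
Proof.
move=> sp sq; apply: leq_trans (size_polyMleq p q) _.
by rewrite -subn1 leq_subLR (leq_add sp sq).
Qed.

End PolySizeLe3.

Section ModifiedRecurrence.
Variable F : idomainType.
Variables (P Q A B : nat -> {poly F}) (a : nat -> F).

Hypothesis P_rec : forall k, P k.+2 = A k.+1 * P k.+1 + B k.+1 * P k.
Hypothesis Q0 : Q 0 = P 0.
Hypothesis QE : forall k, Q k.+1 = P k.+1 + a k.+1 *: P k.

Definition multQ k := A k + (a k.+1)%:P.
Definition multP k := B k - a k *: multQ k.

Lemma Q_succ_split k : Q k.+2 = multQ k.+1 * Q k.+1 + multP k.+1 * P k.
Proof. by rewrite !QE P_rec /multP /multQ -!mul_polyC; ring. Qed.

Lemma multP_mul_P k : multP k.+1 * P k.+1 = B k.+1 * Q k.+1 - a k.+1 *: Q k.+2.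
Proof.
have PE : P k.+1 = Q k.+1 - a k.+1 *: P k by rewrite QE addrK.
have fPk : multP k.+1 * P k = Q k.+2 - multQ k.+1 * Q k.+1.
  by rewrite Q_succ_split addrC addKr.
by rewrite PE mulrBr -scalerAr fPk /multP -!mul_polyC; ring.
Qed.

Lemma Q_three_term k :
  multP k.+1 * Q k.+3 =
    (multP k.+1 * multQ k.+2 - a k.+1 *: multP k.+2) * Q k.+2
    + (multP k.+2 * B k.+1) * Q k.+1.
Proof.
by rewrite Q_succ_split mulrDr [multP k.+1 * (multP k.+2 * _)]mulrCA multP_mul_P
  -!mul_polyC; ring.
Qed.

Hypothesis size_A : forall k, (size (A k) <= 2)%N.
Hypothesis size_B : forall k, (size (B k) <= 2)%N.
Hypothesis B_neq0 : forall k, B k != 0.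

Lemma size_multQ k : (size (multQ k) <= 2)%N.
Proof.
apply: leq_trans (size_polyD _ _) _.
by rewrite geq_max size_A (leq_trans (size_polyC_leq1 _)).
Qed.

Lemma size_multP k : (size (multP k) <= 2)%N.
Proof.
apply: leq_trans (size_polyD _ _) _.
by rewrite geq_max size_B size_polyN (leq_trans (size_scale_leq _ _)) ?size_multQ.
Qed.

Lemma exists_Q_three_term k :
  exists d e g : {poly F},
    [/\ (size d <= 2)%N, (size e <= 3)%N, (size g <= 3)%N,
        (d != 0) || (g != 0) & d * Q k.+2 = e * Q k.+1 + g * Q k].
Proof.
have sQ := size_multQ; have sP := size_multP.
have le3 (p : {poly F}) : (size p <= 2 -> size p <= 3)%N.
  by move=> /leq_trans; apply.
have s1 : (size (1 : {poly F})%R <= 2)%N by rewrite size_poly1.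
case: k => [|k].
  exists 1, (multQ 1), (multP 1); split; rewrite ?oner_neq0 ?le3 //.
  by rewrite mul1r Q_succ_split Q0.
have [fk0|fk_neq0] := eqVneq (multP k.+2) 0.
  exists 1, (multQ k.+2), 0; split; rewrite ?oner_neq0 ?le3 ?size_poly0 //.
  by rewrite mul1r Q_succ_split fk0 !mul0r addr0.
exists (multP k.+1), (multP k.+1 * multQ k.+2 - a k.+1 *: multP k.+2),
  (multP k.+2 * B k.+1); split; rewrite ?size_mul_le2 ?mulf_neq0 ?orbT //.
  apply: leq_trans (size_polyD _ _) _.
  by rewrite geq_max size_mul_le2 // size_polyN (leq_trans (size_scale_leq _ _)) ?le3.
exact: Q_three_term.
Qed.

End ModifiedRecurrence.

Lemma RIpoly_rec (R : realType) (rho beta tau gamma : nat -> R[i]) k :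
  RIpoly rho beta tau gamma k.+2 =
    rho k.+1 *: ('X - (beta k.+1)%:P) * RIpoly rho beta tau gamma k.+1
    + tau k.+1 *: ('X - (gamma k.+1)%:P) * RIpoly rho beta tau gamma k.
Proof.
have RI_pair2 n : (RI_pair rho beta tau gamma n).2 = RIpoly rho beta tau gamma n.+1.
  by rewrite /RIpoly /=; case: (RI_pair rho beta tau gamma n).
rewrite /RIpoly /=; have := RI_pair2 k.
by case: (RI_pair rho beta tau gamma k) => ? ? /= ->.
Qed.

Theorem mainTheorem1 (R : realType) (rho beta tau gamma : nat -> R[i])
  (alpha : nat -> R) :
  (forall n, rho n != 0) -> (forall n, tau n != 0) ->
  beta 0 != 0 -> beta 0 != 1 -> beta 0 != -1 ->
  (forall n, (1 <= n)%N -> beta n != 0) ->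
  (forall n, alpha n != 0) ->
  [/\ RIQpoly rho beta tau gamma alpha 0 = 1,
      RIQpoly rho beta tau gamma alpha 1 =
        rho 0 *: ('X + ((alpha 1)%:C%C / rho 0 - beta 0)%:P) &
      forall n, (1 <= n)%N ->
      exists p q r s t u v w : R[i],
        [|| p != 0, q != 0, r != 0, s != 0, t != 0, u != 0, v != 0 | w != 0] /\
        (p *: 'X + q%:P) * RIQpoly rho beta tau gamma alpha n.+1 =
          (r *: 'X^2 + s *: 'X + t%:P) * RIQpoly rho beta tau gamma alpha n
          + (u *: 'X^2 + v *: 'X + w%:P) * RIQpoly rho beta tau gamma alpha n.-1].
Proof.
move=> rho_neq0 tau_neq0 _ _ _ _ _; split=> //.
  have a1E : (alpha 1)%:C%C = rho 0 * ((alpha 1)%:C%C / rho 0).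
    by rewrite mulrC divfK ?rho_neq0.
  rewrite /= /RIpoly /= {1}a1E -!mul_polyC polyCB polyCM; ring.
case=> // k _.
have B_neq0 n : tau n *: ('X - (gamma n)%:P) != 0.
  by rewrite scaler_eq0 negb_or tau_neq0 polyXsubC_eq0.
have size_lin (c b : R[i]) : (size (c *: ('X - b%:P)) <= 2)%N.
  by rewrite (leq_trans (size_scale_leq _ _)) ?size_XsubC.
have [d [e [g [sd se sg dg dQ]]]] :=
  @exists_Q_three_term _ _ _ _ _ (fun n => (alpha n)%:C%C)
  (RIpoly_rec rho beta tau gamma) (erefl (RIQpoly rho beta tau gamma alpha 0))
  (fun n => erefl (RIQpoly rho beta tau gamma alpha n.+1))
  (fun n => size_lin _ _) (fun n => size_lin _ _) B_neq0 k.
exists d`_1, d`_0, e`_2, e`_1, e`_0, g`_2, g`_1, g`_0; split.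
  case/orP: dg => [/(poly_size_le2_neq0 sd)|/(poly_size_le3_neq0 sg)].
    by case/orP=> ->; rewrite ?orbT.
  by case/or3P=> ->; rewrite ?orbT.
by rewrite -poly_size_le2E // -!poly_size_le3E.
Qed.
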